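(* Let $n\in\mathbb{N}$ and let $\ell:[0,1]\to\mathbb{R}$ be convex and $L$-Lipschitz. There exists an online learning strategy that, when presented sequentially (possibly adversarially and adaptively) with channel test operators $E_{A,B}^{(t)}$, $t\in\{1,\dots,T\}$, and associated losses $\ell_t(\cdot)=\ell((\cdot)-b_t)$ with $b_t\in[0,1]$, outputs hypotheses $N_{A,B}^{(t)}\in\mathsf{PAULI}_n'$ such that for every $n$-qubit Pauli channel $\mathcal{P}$, \[ \sum_{t=1}^T \ell_t\big(\mathrm{Tr}[E_{A,B}^{(t)}N_{A,B}^{(t)}]\big) - \sum_{t=1}^T \ell_t\big(\mathrm{Tr}[E_{A,B}^{(t)}C_{A,B}^{\mathcal{P}}]\big) = \mathcal{O}(L\sqrt{nT}). \]
   Context: $A,B$ are $n$-qubit systems, $d=2^n$. Choi matrix: $C^{\mathcal{N}}_{A,B}=\sum_{i,j=0}^{d-1}|i\rangle\langle j|\otimes\mathcal{N}(|i\rangle\langle j|)$. A channel test operator is $E_{A,B}\geq0$ with $E_{A,B}\leq\sigma_A\otimes\mathbb{1}_B$ for some density operator $\sigma_A$. For $\vec z,\vec x\in\{0,1\}^n$ the Pauli operator is $P^{\vec z,\vec x}=\mathrm{i}^{\vec z\cdot\vec x}Z^{\vec z}X^{\vec x}$ (tensor products of single-qubit $Z^{z_i}$, $X^{x_i}$). An $n$-qubit Pauli channel is $\mathcal{P}(\rho)=\sum_{\vec z,\vec x}p_{\vec z,\vec x}P^{\vec z,\vec x}\rho P^{\vec z,\vec x\dagger}$ for a probability vector $(p_{\vec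 z,\vec x})$ on $\{0,1\}^n\times\{0,1\}^n$. $\mathsf{PAULI}_n'$ is the set of Choi matrices of $n$-qubit Pauli channels. In round $t$ the adversary presents $E^{(t)}$, the learner outputs $N^{(t)}$ (depending only on past information) and predicts $\mathrm{Tr}[E^{(t)}N^{(t)}]$, then $b_t$ is revealed. *)

From HB Require Import structures.
From mathcomp Require Import all_boot all_order all_algebra.
From mathcomp Require Import complex mxtens.
Set Implicit Arguments. Unset Strict Implicit. Unset Printing Implicit Defensive.
Import Order.TTheory GRing.Theory Num.Theory.
Local Open Scope ring_scope.

Section QDefs.
Variable R : rcfType.
Local Notation C := R[i].

Definition adjmx {m k} (A : 'M[C]_(m, k)) : 'M[C]_(k, m) :=
  (map_mx (fun c : C => (c^*)%C) A)^T.

(* positive semidefinite: Hermitian and <v, A v> >= 0 for all v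
   (the order on R[i] means "real and nonnegative") *)
Definition psd {m} (A : 'M[C]_m) : Prop :=
  A = adjmx A /\ forall v : 'cV[C]_m, 0 <= (adjmx v *m A *m v) 0 0.

Definition loewner_le {m} (A B : 'M[C]_m) : Prop := psd (B - A).

Definition density {m} (s : 'M[C]_m) : Prop := psd s /\ \tr s = 1.

Definition channel_test {d} (E : 'M[C]_(d * d)) : Prop :=
  psd E /\ exists sigma : 'M[C]_d, density sigma /\
    loewner_le E (sigma *t (1%:M : 'M[C]_d)).

Definition choi {d} (N : 'M[C]_d -> 'M[C]_d) : 'M[C]_(d * d) :=
  \sum_(i < d) \sum_(j < d) (delta_mx i j *t N (delta_mx i j)).

Definition pauliX : 'M[C]_2 := \matrix_(a < 2, b < 2) (if a == b then 0 else 1).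
Definition pauliZ : 'M[C]_2 :=
  \matrix_(a < 2, b < 2) (if a == b then (if a == 0 :> nat then 1 else -1) else 0).

Fixpoint ntens (F : bool -> 'M[C]_2) (n : nat) : n.-tuple bool -> 'M[C]_(2 ^ n) :=
  match n return n.-tuple bool -> 'M[C]_(2 ^ n) with
  | 0 => fun _ => 1%:M
  | n'.+1 => fun v =>
      castmx (esym (expnS 2 n'), esym (expnS 2 n'))
        (F (thead v) *t ntens F [tuple of behead v])
  end.

Definition Zpow {n} (z : n.-tuple bool) : 'M[C]_(2 ^ n) :=
  ntens (fun b => if b then pauliZ else 1%:M) z.
Definition Xpow {n} (x : n.-tuple bool) : 'M[C]_(2 ^ n) :=
  ntens (fun b => if b then pauliX else 1%:M) x.

Definition dotb {n} (z x : n.-tuple bool) : nat := \sum_(i < n) (tnth z i && tnth x i).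

Definition pauli {n} (z x : n.-tuple bool) : 'M[C]_(2 ^ n) :=
  ('i%C ^+ dotb z x) *: (Zpow z *m Xpow x).

Definition prob_vec {T : finType} (p : {ffun T -> R}) : Prop :=
  (forall t, 0 <= p t) /\ \sum_t p t = 1.

Definition pauli_channel {n} (p : {ffun (n.-tuple bool * n.-tuple bool) -> R})
  (rho : 'M[C]_(2 ^ n)) : 'M[C]_(2 ^ n) :=
  \sum_(zx : n.-tuple bool * n.-tuple bool)
     (p zx)%:C%C *: (pauli zx.1 zx.2 *m rho *m adjmx (pauli zx.1 zx.2)).

Definition in_PAULI' {n} (N : 'M[C]_(2 ^ n * 2 ^ n)) : Prop :=
  exists p, prob_vec p /\ N = choi (@pauli_channel n p).

(* online learner: maps the history of past rounds (E^(s), b_s), s < t,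
   to the hypothesis N^(t) *)
Definition history n := seq ('M[C]_(2 ^ n * 2 ^ n) * R).
Definition strategy n := history n -> 'M[C]_(2 ^ n * 2 ^ n).

Definition past n (E : nat -> 'M[C]_(2 ^ n * 2 ^ n)) (b : nat -> R) (t : nat)
  : history n := [seq (E s, b s) | s <- iota 0 t].

(* the prediction Tr[E N] (a real number for Hermitian E, N) *)
Definition pred_val {m} (E N : 'M[C]_m) : R := complex.Re (\tr (E *m N)).

Definition convex_on_pm1 (ell : R -> R) : Prop :=
  forall x y a, -1 <= x <= 1 -> -1 <= y <= 1 -> 0 <= a <= 1 ->
    ell (a * x + (1 - a) * y) <= a * ell x + (1 - a) * ell y.

Definition lipschitz_on_pm1 (L : R) (ell : R -> R) : Prop :=
  forall x y, -1 <= x <= 1 -> -1 <= y <= 1 -> `|ell x - ell y| <= L * `|x - y|.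

End QDefs.

(* The prediction Tr[E C^P] of the Pauli channel with weights p is the average
   sum_i p_i a_i of the predictions a_i = Tr[E C^(P_i)] of the 4^n unitary Pauli
   channels, and a_i lies in [0, 1]: C^(P_i) = v v^* for a vector v with
   <v, (sigma (x) 1) v> = Tr sigma = 1, while 0 <= E <= sigma (x) 1.  Learning is
   therefore online convex optimisation over the simplex of 4^n experts.  Replacing
   the loss by its linearisation at the learner's prediction (a difference quotient
   with step 1/T, which costs 2L/T per round) and running multiplicative weights
   with rate about sqrt (n / T) on the rescaled linear losses gives regret
   O(L sqrt (T log 4^n)).  A real closed field has no logarithm, so the potential
   argument of multiplicative weights measures weights by exponents of
   beta = 1 - 1/m, a discrete logarithm of resolution 1/m.  When T <= 16 n the
   trivial bound L T <= 4 L sqrt (n T) suffices. *)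

From HB Require Import structures.
From mathcomp Require Import all_boot all_order all_algebra.
From mathcomp Require Import complex mxtens.
From mathcomp Require Import ring lra zify.
Import Order.TTheory GRing.Theory Num.Theory.
Local Open Scope ring_scope.
Set Implicit Arguments. Unset Strict Implicit. Unset Printing Implicit Defensive.

Section QuantumLinearAlgebra.
Variable R : rcfType.
Local Notation C := R[i].

Lemma adjmxM m k l (A : 'M[C]_(m, k)) (B : 'M[C]_(k, l)) :
  adjmx (A *m B) = adjmx B *m adjmx A.
Proof.
apply/matrixP=> i j; rewrite !mxE rmorph_sum; apply: eq_bigr => h _.
by rewrite !mxE rmorphM mulrC.
Qed.

Lemma adjmx_sum m k I (r : seq I) (P : pred I) (F : I -> 'M[C]_(m, k)) :
  adjmx (\sum_(i <- r | P i) F i) = \sum_(i <- r | P i) adjmx (F i).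
Proof.
apply/matrixP=> a b; rewrite !mxE !summxE rmorph_sum.
by apply: eq_bigr => h _; rewrite !mxE.
Qed.

Lemma adjmxZ m k c (A : 'M[C]_(m, k)) : adjmx (c *: A) = (c^*)%C *: adjmx A.
Proof. by apply/matrixP=> a b; rewrite !mxE rmorphM. Qed.

Lemma adjmx1 m : adjmx (1%:M : 'M[C]_m) = 1%:M.
Proof. by apply/matrixP=> a b; rewrite !mxE rmorph_nat eq_sym. Qed.

Lemma adjmx_tens m k p q (A : 'M[C]_(m, k)) (B : 'M[C]_(p, q)) :
  adjmx (A *t B) = adjmx A *t adjmx B.
Proof. by apply/matrixP=> a b; rewrite !mxE rmorphM. Qed.

Lemma tensmx11 m k : (1%:M : 'M[C]_m) *t (1%:M : 'M[C]_k) = 1%:M.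
Proof.
apply/matrixP=> a b.
case: (mxtens_indexP a) => a1 a2; case: (mxtens_indexP b) => b1 b2.
rewrite tensmxE !mxE -natrM mulnb; congr (_%:R); congr nat_of_bool.
apply/idP/idP; first by case/andP=> /eqP-> /eqP->.
by move/eqP/(can_inj (@mxtens_indexK _ _)) => [-> ->]; rewrite !eqxx.
Qed.

Lemma tensmx_sumr m k p q I (r : seq I) (P : pred I) (A : 'M[C]_(m, k))
    (F : I -> 'M[C]_(p, q)) :
  A *t (\sum_(i <- r | P i) F i) = \sum_(i <- r | P i) (A *t F i).
Proof.
apply/matrixP=> a b; rewrite !mxE !summxE mulr_sumr.
by apply: eq_bigr => i _; rewrite !mxE.
Qed.

Lemma tensmxZr m k p q c (A : 'M[C]_(m, k)) (B : 'M[C]_(p, q)) :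
  A *t (c *: B) = c *: (A *t B).
Proof. by apply/matrixP=> a b; rewrite !mxE mulrCA. Qed.

Lemma mxtrace_tens m k (A : 'M[C]_m) (B : 'M[C]_k) :
  \tr (A *t B) = \tr A * \tr B.
Proof. by rewrite /mxtrace mulr_sum; apply: eq_bigr => i _; rewrite !mxE. Qed.

Lemma mxtrace_delta m (j k : 'I_m) : \tr (delta_mx j k : 'M[C]_m) = (j == k)%:R.
Proof.
rewrite /mxtrace (bigD1 j) //= big1 ?addr0; first by rewrite mxE eqxx.
by move=> i /negbTE hij; rewrite mxE hij.
Qed.

Lemma mxtrace_mul_delta m (A : 'M[C]_m) (j k : 'I_m) :
  \tr (A *m delta_mx j k) = A k j.
Proof.
rewrite /mxtrace (bigD1 k) //= big1 ?addr0.
  rewrite mxE (bigD1 j) //= big1 ?addr0; first by rewrite mxE !eqxx mulr1.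
  by move=> i /negbTE hij; rewrite mxE hij mulr0.
move=> i /negbTE hik; rewrite mxE big1 // => l _.
by rewrite mxE hik andbF mulr0.
Qed.

Lemma mxtrace_sum m I (r : seq I) (P : pred I) (F : I -> 'M[C]_m) :
  \tr (\sum_(i <- r | P i) F i) = \sum_(i <- r | P i) \tr (F i).
Proof. exact: (big_morph _ (@mxtraceD _ _) (@mxtrace0 _ _)). Qed.

Lemma quad_form_trace m (v : 'cV[C]_m) (M : 'M[C]_m) :
  (adjmx v *m M *m v) 0 0 = \tr (M *m (v *m adjmx v)).
Proof. by rewrite mulmxA mxtrace_mulC -mulmxA mulmxA /mxtrace big_ord1. Qed.

Lemma Re_sum I (r : seq I) (P : pred I) (F : I -> C) :
  complex.Re (\sum_(i <- r | P i) F i) = \sum_(i <- r | P i) complex.Re (F i).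
Proof. exact: (@raddf_sum _ _ (@complex.Re R : Rcomplex R -> R)). Qed.

Lemma ReM_real (a : R) (z : C) : complex.Re (a%:C%C * z) = a * complex.Re z.
Proof. by case: z => x y /=; rewrite mul0r subr0. Qed.

Definition unitary m (U : 'M[C]_m) : Prop := U *m adjmx U = 1%:M.

Lemma unitary1 m : unitary (1%:M : 'M[C]_m).
Proof. by rewrite /unitary adjmx1 mul1mx. Qed.

Lemma unitaryM m (U V : 'M[C]_m) : unitary U -> unitary V -> unitary (U *m V).
Proof. by rewrite /unitary adjmxM mulmxA -(mulmxA U) => hU ->; rewrite mulmx1. Qed.

Lemma unitary_tens m k (U : 'M[C]_m) (V : 'M[C]_k) :
  unitary U -> unitary V -> unitary (U *t V).
Proof. by rewrite /unitary adjmx_tens tensmx_mul => -> ->; rewrite tensmx11. Qed.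

Lemma unitary_cast m m' (e : m = m') (U : 'M[C]_m) :
  unitary U -> unitary (castmx (e, e) U).
Proof. by case: m' / e; rewrite castmx_id. Qed.

Lemma unitary_ntens F k (v : k.-tuple bool) :
  (forall b, unitary (F b)) -> unitary (ntens F v).
Proof.
move=> hF; elim: k v => [|k IH] v /=; first exact: unitary1.
exact/unitary_cast/unitary_tens.
Qed.

Lemma unitary_pauliZ : unitary (pauliZ R).
Proof.
apply/matrixP=> a b; rewrite /unitary /adjmx !mxE big_ord_recl big_ord1 !mxE.
by case: a => [[|[|a]] ha] //; case: b => [[|[|b]] hb] //=; simpc.
Qed.

Lemma unitary_pauliX : unitary (pauliX R).
Proof.
apply/matrixP=> a b; rewrite /unitary /adjmx !mxE big_ord_recl big_ord1 !mxE.
by case: a => [[|[|a]] ha] //; case: b => [[|[|b]] hb] //=; simpc.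
Qed.

Lemma unitary_pauli n (z x : n.-tuple bool) : unitary (pauli R z x).
Proof.
rewrite /unitary /pauli adjmxZ -scalemxAl -scalemxAr scalerA.
have -> : 'i%C ^+ dotb z x * ('i%C ^+ dotb z x)^*%C = 1 :> C.
  by rewrite rmorphXn -exprMn; simpc; rewrite expr1n.
rewrite scale1r; apply: unitaryM; apply: unitary_ntens => -[];
  [exact: unitary_pauliZ | exact: unitary1 | exact: unitary_pauliX | exact: unitary1].
Qed.

Definition unitary_channel m (U : 'M[C]_m) (rho : 'M[C]_m) : 'M[C]_m :=
  U *m rho *m adjmx U.

Definition max_entangled m : 'M[C]_(m * m, 1 * 1) :=
  \sum_(j < m) (delta_mx j 0 *t delta_mx j 0).

Lemma max_entangled_outer m : max_entangled m *m adjmx (max_entangled m) =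
  \sum_(j < m) \sum_(k < m) (delta_mx j k *t delta_mx j k).
Proof.
have adj_delta (j : 'I_m) : adjmx (delta_mx j 0 : 'cV[C]_m) = delta_mx 0 j.
  by apply/matrixP=> a b; rewrite !mxE rmorph_nat andbC.
rewrite /max_entangled adjmx_sum mulmx_suml; apply: eq_bigr => j _.
rewrite mulmx_sumr; apply: eq_bigr => k _.
by rewrite adjmx_tens tensmx_mul !adj_delta mul_delta_mx.
Qed.

Lemma choi_unitary_channel m (U : 'M[C]_m) :
  let v := (1%:M *t U) *m max_entangled m in
  choi (unitary_channel U) = v *m adjmx v.
Proof.
rewrite /= adjmxM mulmxA -(mulmxA _ (max_entangled m)) max_entangled_outer.
rewrite adjmx_tens adjmx1 mulmx_sumr mulmx_suml; apply: eq_bigr => j _.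
rewrite mulmx_sumr mulmx_suml; apply: eq_bigr => k _.
by rewrite !tensmx_mul mul1mx mulmx1.
Qed.

Lemma mxtrace_tens_choi_unitary m (S U : 'M[C]_m) : unitary U ->
  \tr ((S *t 1%:M) *m choi (unitary_channel U)) = \tr S.
Proof.
move=> hU; have UU : adjmx U *m U = 1%:M by apply: mulmx1C.
rewrite /choi mulmx_sumr mxtrace_sum; apply: eq_bigr => j _.
rewrite mulmx_sumr mxtrace_sum (bigD1 j) //= big1 ?addr0 => [|k /negbTE hjk];
  rewrite tensmx_mul mxtrace_tens mxtrace_mul_delta mul1mx /unitary_channel;
  rewrite mxtrace_mulC mulmxA UU mul1mx mxtrace_delta ?eqxx ?mulr1 //.
by rewrite eq_sym hjk mulr0.
Qed.

Lemma pred_val_unitary_range m (E : 'M[C]_(m * m)) (U : 'M[C]_m) :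
  channel_test E -> unitary U -> 0 <= pred_val E (choi (unitary_channel U)) <= 1.
Proof.
move=> [[_ E_ge0] [s [[_ trs] [_ E_le]]]] hU.
have := choi_unitary_channel U; set v := _ *m _ => hc.
have s_v : (adjmx v *m (s *t 1%:M) *m v) 0 0 = 1.
  by rewrite quad_form_trace -hc mxtrace_tens_choi_unitary.
move: (E_le v); rewrite mulmxBr mulmxBl mxE s_v mxE subr_ge0.
move: (E_ge0 v); rewrite /pred_val hc -quad_form_trace.
by case: (_ 0 0) => a b; rewrite !lecE /= => /andP[_ ->] /andP[_ ->].
Qed.

Lemma pred_val_suml m (I : finType) (E : 'M[C]_m) (p : I -> R) (M : I -> 'M[C]_m) :
  pred_val E (\sum_i (p i)%:C%C *: M i) = \sum_i p i * pred_val E (M i).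
Proof.
rewrite /pred_val mulmx_sumr mxtrace_sum Re_sum.
by apply: eq_bigr => i _; rewrite -scalemxAr mxtraceZ ReM_real.
Qed.

Lemma choi_pauli_channel n (p : {ffun (n.-tuple bool * n.-tuple bool) -> R}) :
  choi (pauli_channel p) =
  \sum_i (p i)%:C%C *: choi (unitary_channel (pauli R i.1 i.2)).
Proof.
rewrite /choi /pauli_channel.
under [RHS]eq_bigr => i _ do rewrite scaler_sumr.
rewrite [RHS]exchange_big; apply: eq_bigr => a _.
under [RHS]eq_bigr => i _ do rewrite scaler_sumr.
rewrite [RHS]exchange_big; apply: eq_bigr => b _.
rewrite tensmx_sumr; apply: eq_bigr => i _.
by rewrite tensmxZr.
Qed.

End QuantumLinearAlgebra.

Section ConvexLipschitz.
Variables (R : rcfType) (ell : R -> R) (L : R).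
Hypothesis ell_convex : convex_on_pm1 ell.
Hypothesis ell_lipschitz : lipschitz_on_pm1 L ell.

Lemma lipschitz_ge0 : 0 <= L.
Proof.
have := ell_lipschitz (x := 1) (y := -1) ltac:(lra) ltac:(lra).
rewrite [`|1 - -1|]ger0_norm; last by lra.
by move=> /(le_trans (normr_ge0 _)); nra.
Qed.

Lemma convex_chord a b c : -1 <= a -> a <= b -> b <= c -> c <= 1 ->
  (c - b) * (ell b - ell a) <= (b - a) * (ell c - ell b).
Proof.
move=> a_ge ab bc c_le.
have [eq_ac|neq_ac] := eqVneq a c.
  have -> : b = a by apply/le_anti; rewrite ab andbT eq_ac.
  by rewrite !subrr mulr0 mul0r.
have ac : 0 < c - a by rewrite subr_gt0 lt_neqAle neq_ac (le_trans ab).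
set t := (c - b) / (c - a).
have t01 : 0 <= t <= 1.
  apply/andP; split; first by apply: divr_ge0; lra.
  by rewrite ler_pdivrMr //; lra.
have b_mix : t * a + (1 - t) * c = b by rewrite /t; field; rewrite gt_eqF.
have := ell_convex (x := a) (y := c) _ _ t01; rewrite b_mix.
move=> /(_ ltac:(lra) ltac:(lra)) /(ler_wpM2l (ltW ac)) conv.
nra.
Qed.

Lemma secant_slope_le u v s : -1 <= u -> u < v -> v <= 1 ->
  s * (v - u) = ell v - ell u -> `|s| <= L.
Proof.
move=> u_ge uv v_le secant; have duv : 0 < v - u by rewrite subr_gt0.
rewrite -(ler_pM2r duv) -(gtr0_norm duv) -normrM secant.
by apply: ell_lipschitz; lra.
Qed.

Lemma secant_subgradient u v s y : -1 <= u -> u < v -> v <= 1 ->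
  s * (v - u) = ell v - ell u -> -1 <= y <= 1 ->
  ell u - ell y <= s * (u - y) + 2 * L * (v - u) /\
  ell v - ell y <= s * (v - y) + 2 * L * (v - u).
Proof.
move=> u_ge uv v_le secant /andP[y_ge y_le].
have duv : 0 < v - u by rewrite subr_gt0.
have err0 : 0 <= 2 * L * (v - u) by have := lipschitz_ge0; nra.
have sv : ell v = s * (v - u) + ell u by rewrite secant subrK.
have [yu|uy] := lerP y u.
  have : ell u - ell y <= s * (u - y).
    rewrite -(ler_pM2l duv); have := convex_chord y_ge yu (ltW uv) v_le.
    by rewrite -secant; nra.
  by rewrite sv; split; nra.
have [vy|yv] := lerP v y.
  have : ell v - ell y <= s * (v - y).
    rewrite -(ler_pM2l duv); have := convex_chord u_ge (ltW uv) vy y_le.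
    by rewrite -secant; nra.
  by rewrite sv; split; nra.
have near x : u <= x <= v -> ell x - ell y <= L * (v - u) /\ - L * (v - u) <= s * (x - y).
  move=> /andP[ux xv]; split.
    have := ell_lipschitz (x := x) (y := y) ltac:(lra) ltac:(lra).
    move=> /(le_trans (ler_norm _)) /le_trans; apply.
    by apply: ler_wpM2l; [exact: lipschitz_ge0 | rewrite ler_norml; lra].
  have := secant_slope_le u_ge uv v_le secant.
  rewrite ler_norml => /andP[sL1 sL2]; nra.
have [nu1 nu2] := near u ltac:(lra); have [nv1 nv2] := near v ltac:(lra).
by split; lra.
Qed.

Definition diff_quot (d x : R) : R :=
  if x + d <= 1 then (ell (x + d) - ell x) / d else (ell x - ell (x - d)) / d.

Lemma diff_quot_subgradient d x y : 0 < d <= 1 -> -1 <= x <= 1 -> -1 <= y <= 1 ->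
  `|diff_quot d x| <= L /\
  ell x - ell y <= diff_quot d x * (x - y) + 2 * L * d.
Proof.
move=> /andP[d0 d1] /andP[x_ge x_le] hy; rewrite /diff_quot.
have fwd : x + d - x = d by ring.
have bwd : x - (x - d) = d by ring.
case: ifP => [xd|/negbT]; [set s := (ell (x + d) - _) / d | set s := (ell x - _) / d].
  have secant : s * (x + d - x) = ell (x + d) - ell x by rewrite fwd divfK // gt_eqF.
  have u_lt_v : x < x + d by rewrite ltrDl.
  split; first exact: secant_slope_le secant.
  by have [+ _] := secant_subgradient x_ge u_lt_v xd secant hy; rewrite fwd.
rewrite -ltNge => xd.
have secant : s * (x - (x - d)) = ell x - ell (x - d) by rewrite bwd divfK // gt_eqF.
have u_lt_v : x - d < x by rewrite ltrBlDr ltrDl.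
have u_ge : -1 <= x - d by lra.
split; first exact: secant_slope_le secant.
by have [_ +] := secant_subgradient u_ge u_lt_v x_le secant hy; rewrite bwd.
Qed.

End ConvexLipschitz.

Section DiscreteLogarithm.
Variable R : realFieldType.

Lemma bounded_floor (K : nat) (x : R) : 0 <= x <= K%:R ->
  exists j : nat, j%:R <= x < j%:R + 1.
Proof.
elim: K x => [|K IH] x /andP[x0 xK].
  by exists 0%N; rewrite add0r; apply/andP; split => //; lra.
have [xK'|Kx] := ltrP x K%:R; first by apply: IH; rewrite x0 ltW.
have [xK1|K1x] := ltrP x (K%:R + 1); first by exists K; rewrite Kx.
by exists K.+1; move: xK; rewrite -!natr1 => xK; apply/andP; split; lra.
Qed.

Lemma bernoulli_le (a : R) (j : nat) : 0 <= a <= 1 -> 1 - j%:R * a <= (1 - a) ^+ j.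
Proof.
move=> /andP[a0 a1]; elim: j => [|j IH]; first by rewrite expr0 mul0r subr0.
rewrite exprS -natr1.
have := ler_wpM2l (_ : 0 <= 1 - a) IH; rewrite subr_ge0 => /(_ a1).
by have := ler0n R j; nra.
Qed.

Lemma pow1B_le (a : R) (k : nat) : 0 <= a <= 1 ->
  (1 - a) ^+ k <= 1 - k%:R * a + k%:R * (k%:R - 1) / 2 * a ^+ 2.
Proof.
move=> /andP[a0 a1]; elim: k => [|k IH]; first by rewrite expr0; lra.
rewrite exprS -natr1.
have := ler_wpM2l (_ : 0 <= 1 - a) IH; rewrite subr_ge0 => /(_ a1).
have : 0 <= k%:R * (k%:R - 1) / 2 * a ^+ 3 :> R.
  case: k {IH} => [|k]; first by rewrite !mul0r.
  have k0 := ler0n R k; rewrite -natr1 addrK.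
  by apply: mulr_ge0; [apply: divr_ge0 => //; nra | exact: exprn_ge0].
by rewrite !exprS expr0; have := ler0n R k; nra.
Qed.

Variable m : nat.
Hypothesis m_ge4 : (4 <= m)%N.
Local Notation beta := (1 - m%:R^-1 : R).

Let m_invK : m%:R * m%:R^-1 = 1 :> R.
Proof. by rewrite mulfV // pnatr_eq0 -lt0n (leq_trans _ m_ge4). Qed.

Let m_inv01 : 0 < (m%:R^-1 : R) <= 1 / 4.
Proof.
have mR : (4 : R) <= m%:R by rewrite (ler_nat R 4 m).
have a0 : (0 : R) < m%:R^-1 by rewrite invr_gt0; lra.
by rewrite a0 /=; have := m_invK; nra.
Qed.

Lemma dlog_base_ge0 : 0 <= beta.
Proof. by have := m_inv01; lra. Qed.

Lemma dlog_base_lt1 : beta < 1.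
Proof. by have := m_inv01; lra. Qed.

Lemma dlog_base_half : beta ^+ m <= 1 / 2.
Proof.
have := m_inv01 => /andP[a0 a1]; have := @pow1B_le m%:R^-1 m ltac:(lra).
have -> : m%:R * (m%:R - 1) / 2 * m%:R^-1 ^+ 2 =
    (m%:R * m%:R^-1) * (m%:R * m%:R^-1 - m%:R^-1) / 2 :> R by ring.
by rewrite m_invK; lra.
Qed.

(* Since ln beta ~ -1/m, these are discrete forms of -y - y^2 <= ln (1 - y) <= -y:
   beta ^+ (m (y + y^2)) <= 1 - y <= beta ^+ (m y), up to rounding. *)
Lemma dlog_base_pow_le (y : R) : 0 <= y <= 1 ->
  exists j : nat, m%:R * y - 1 <= j%:R /\ 1 - y <= beta ^+ j.
Proof.
move=> /andP[y0 y1]; have := m_inv01 => /andP[a0 a1].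
have [j /andP[jy yj]] : exists j : nat, j%:R <= m%:R * y < j%:R + 1.
  by apply: (@bounded_floor m); rewrite mulr_ge0 //= ler_piMr.
exists j; split; first lra.
apply: le_trans (bernoulli_le j _); last by lra.
have := ler_wpM2r (ltW a0) jy; rewrite mulrAC m_invK mul1r; lra.
Qed.

Lemma quadratic_lower (y u : R) : 0 <= y <= 1 / 4 -> y + y ^+ 2 <= u <= 1 ->
  y <= u - u ^+ 2 / 2.
Proof.
move=> /andP[y0 y1] /andP[yu u1].
have yy : y ^+ 2 <= 1 / 16 by rewrite expr2; have := ler_pM y0 y0 y1 y1; lra.
have mono : (y + y ^+ 2) - (y + y ^+ 2) ^+ 2 / 2 <= u - u ^+ 2 / 2.
  rewrite -subr_ge0.
  have -> : u - u ^+ 2 / 2 - ((y + y ^+ 2) - (y + y ^+ 2) ^+ 2 / 2)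
          = (u - (y + y ^+ 2)) * (1 - (u + (y + y ^+ 2)) / 2) by ring.
  by apply: mulr_ge0; lra.
apply: le_trans mono; rewrite -subr_ge0.
have -> : y + y ^+ 2 - (y + y ^+ 2) ^+ 2 / 2 - y = y ^+ 2 * (1 - (1 + y) ^+ 2 / 2) by ring.
have -> : (1 + y) ^+ 2 = 1 + 2 * y + y ^+ 2 by ring.
by apply: mulr_ge0; [exact: sqr_ge0 | lra].
Qed.

Lemma dlog_base_pow_ge (y : R) : 0 <= y <= 1 / 4 ->
  exists k : nat, k%:R <= m%:R * (y + y ^+ 2) + 1 /\ beta ^+ k <= 1 - y.
Proof.
move=> /andP[y0 y1]; have := m_inv01 => /andP[a0 a1].
have yy : y ^+ 2 <= 1 / 16 by rewrite expr2; have := ler_pM y0 y0 y1 y1; lra.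
have yy0 : 0 <= y + y ^+ 2 by rewrite addr_ge0 ?sqr_ge0.
have [j /andP[jy yj]] : exists j : nat, j%:R <= m%:R * (y + y ^+ 2) < j%:R + 1.
  by apply: (@bounded_floor m); rewrite mulr_ge0 //= ler_piMr //; lra.
exists j.+1; rewrite -natr1; split; first lra.
have aK := m_invK; set a := m%:R^-1 in a0 a1 aK *; set k : R := j%:R + 1.
have k0 : 0 <= k by rewrite /k; have := ler0n R j; lra.
have [ka1 ka2] : y + y ^+ 2 <= k * a /\ k * a <= y + y ^+ 2 + a.
  have mva : m%:R * (y + y ^+ 2) * a = y + y ^+ 2 by rewrite mulrAC aK mul1r.
  have := ler_wpM2r (ltW a0) (ltW yj); have := ler_wpM2r (ltW a0) jy.
  by rewrite mva /k mulrDl mul1r; split; lra.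
apply: le_trans (pow1B_le _ _) _; first by lra.
rewrite -natr1 -/k.
have := @quadratic_lower y (k * a) ltac:(lra) ltac:(lra).
have : 0 <= k * a ^+ 2 / 2 by apply: divr_ge0 => //; rewrite mulr_ge0 ?sqr_ge0.
have -> : k * (k - 1) / 2 * a ^+ 2 = (k * a) ^+ 2 / 2 - k * a ^+ 2 / 2 by ring.
lra.
Qed.

End DiscreteLogarithm.

Section MultiplicativeWeights.
Variables (R : realFieldType) (I : finType) (lam : R) (g : nat -> I -> R).

Fixpoint mw_weight (t : nat) (i : I) : R :=
  if t is t'.+1 then mw_weight t' i * (1 - lam * g t' i) else 1.
Definition mw_total t := \sum_i mw_weight t i.
Definition mw_prob t i := mw_weight t i / mw_total t.
Definition mw_loss t := \sum_i mw_prob t i * g t i.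

Variables (T : nat) (i0 : I).
Hypothesis lam_small : 0 <= lam <= 1 / 4.
Hypothesis g01 : forall t, (t < T)%N -> forall i, 0 <= g t i <= 1.

Lemma mw_weight_pos t i : (t <= T)%N -> 0 < mw_weight t i.
Proof.
elim: t => [|t IH] tT /=; first exact: ltr01.
rewrite mulr_gt0 ?IH 1?ltnW //; have := g01 tT i; move: lam_small.
by move=> /andP[l0 l1] /andP[g0 g1]; have := ler_wpM2l l0 g1; lra.
Qed.

Lemma mw_total_pos t : (t <= T)%N -> 0 < mw_total t.
Proof.
move=> tT; rewrite /mw_total (bigD1 i0) //= ltr_pwDl ?mw_weight_pos //.
by apply: sumr_ge0 => i _; rewrite ltW ?mw_weight_pos.
Qed.

Lemma mw_prob_ge0 t i : (t <= T)%N -> 0 <= mw_prob t i.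
Proof. by move=> tT; rewrite divr_ge0 // ltW ?mw_weight_pos ?mw_total_pos. Qed.

Lemma mw_prob_sum t : (t <= T)%N -> \sum_i mw_prob t i = 1.
Proof. by move=> tT; rewrite -mulr_suml divff // gt_eqF ?mw_total_pos. Qed.

Lemma mw_loss_range t : (t < T)%N -> 0 <= mw_loss t <= 1.
Proof.
move=> tT; have tT' := ltnW tT; apply/andP; split.
  by apply: sumr_ge0 => i _; rewrite mulr_ge0 ?mw_prob_ge0 //; case/andP: (g01 tT i).
rewrite -(mw_prob_sum tT'); apply: ler_sum => i _.
by rewrite ler_piMr ?mw_prob_ge0 //; case/andP: (g01 tT i).
Qed.

Lemma mw_totalS t : (t <= T)%N -> mw_total t.+1 = mw_total t * (1 - lam * mw_loss t).
Proof.
move=> tT; have W0 := mw_total_pos tT; rewrite /mw_loss /mw_prob /mw_total /= in W0 *.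
rewrite mulrBr mulr1 !mulr_sumr -sumrB; apply: eq_bigr => i _.
by field; rewrite gt_eqF.
Qed.

Variable m : nat.
Hypothesis m_ge4 : (4 <= m)%N.
Local Notation beta := (1 - m%:R^-1 : R).

Lemma mw_total_le t : (t <= T)%N -> exists J : nat,
  m%:R * lam * \sum_(s < t) mw_loss s - t%:R <= J%:R /\
  mw_total t <= #|I|%:R * beta ^+ J.
Proof.
elim: t => [|t IH] tT.
  exists 0%N; rewrite big_ord0 mulr0 sub0r oppr0 expr0 mulr1.
  by split => //; rewrite /mw_total /= sumr_const.
have [J [JS JW]] := IH (ltnW tT).
have [l0 l1] := andP (mw_loss_range tT); move: lam_small => /andP[lam0 lam1].
have y01 : 0 <= lam * mw_loss t <= 1.
  by rewrite mulr_ge0 //=; have := ler_wpM2l lam0 l1; lra.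
have [j [jy jb]] := dlog_base_pow_le m_ge4 y01.
exists (J + j)%N; rewrite big_ord_recr /= natrD -natr1 (mw_totalS (ltnW tT)) exprD.
split; first by rewrite mulrDr; set S := \sum_(s < t) _ in JS *; lra.
rewrite mulrA; apply: ler_pM => //; last by lra.
by rewrite ltW // mw_total_pos // ltnW.
Qed.

Lemma mw_weight_ge i t : (t <= T)%N -> exists K : nat,
  K%:R <= m%:R * lam * \sum_(s < t) g s i + m%:R * lam ^+ 2 * t%:R + t%:R /\
  beta ^+ K <= mw_weight t i.
Proof.
elim: t => [|t IH] tT.
  by exists 0%N; rewrite big_ord0 !mulr0 !addr0 expr0.
have [K [KS Kw]] := IH (ltnW tT).
have [g0 g1] := andP (g01 tT i); move: lam_small => /andP[lam0 lam1].
have y01 : 0 <= lam * g t i <= 1 / 4.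
  by rewrite mulr_ge0 //=; have := ler_wpM2l lam0 g1; lra.
have [k [ky kb]] := dlog_base_pow_ge m_ge4 y01.
have sq : (lam * g t i) ^+ 2 <= lam ^+ 2.
  by rewrite exprMn ler_piMr ?sqr_ge0 // expr_le1.
exists (K + k)%N; rewrite big_ord_recr /= natrD -natr1 exprD.
split; first by have := ler_wpM2l (ler0n R m) sq; lra.
by rewrite ler_pM // exprn_ge0 // dlog_base_ge0.
Qed.

Lemma mw_regret (r : nat) (i : I) : #|I|%:R * beta ^+ r <= 1 ->
  m%:R * lam * \sum_(t < T) mw_loss t <=
  m%:R * lam * \sum_(t < T) g t i + m%:R * lam ^+ 2 * T%:R + 2 * T%:R + r%:R.
Proof.
move=> Nr; have [J [JS JW]] := mw_total_le (leqnn T).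
have [K [KS Kw]] := mw_weight_ge i (leqnn T).
have b0 := dlog_base_ge0 R m_ge4; have b1 := dlog_base_lt1 R m_ge4.
have b0' : 0 < beta.
  have mR : (4 : R) <= m%:R by rewrite (ler_nat R 4 m).
  by rewrite subr_gt0 invf_lt1 //; lra.
have wW : mw_weight T i <= mw_total T.
  rewrite /mw_total (bigD1 i) //= lerDl.
  by apply: sumr_ge0 => j _; rewrite ltW ?mw_weight_pos.
have JKr : (J <= K + r)%N.
  rewrite -(ler_iXn2l b0' b1) exprD.
  have := ler_wpM2r (exprn_ge0 r b0) (le_trans Kw (le_trans wW JW)).
  move/le_trans; apply; rewrite mulrAC -[X in _ <= X]mul1r.
  by rewrite ler_wpM2r ?exprn_ge0.
have : (J%:R : R) <= K%:R + r%:R by rewrite -natrD ler_nat.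
lra.
Qed.

Lemma mw_regret_mixed (r : nat) (p : I -> R) :
  (forall i, 0 <= p i) -> \sum_i p i = 1 -> #|I|%:R * beta ^+ r <= 1 ->
  m%:R * lam * \sum_(t < T) mw_loss t <=
  m%:R * lam * \sum_(t < T) \sum_i p i * g t i
  + (m%:R * lam ^+ 2 * T%:R + 2 * T%:R + r%:R).
Proof.
move=> p0 p1 Nr; set c := _ + r%:R.
have -> : m%:R * lam * \sum_(t < T) mw_loss t =
    \sum_i p i * (m%:R * lam * \sum_(t < T) mw_loss t) by rewrite -mulr_suml p1 mul1r.
have -> : m%:R * lam * \sum_(t < T) \sum_i p i * g t i + c =
    \sum_i p i * (m%:R * lam * \sum_(t < T) g t i + c).
  rewrite exchange_big /= mulr_sumr {1}(_ : c = \sum_i p i * c); last first.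
    by rewrite -mulr_suml p1 mul1r.
  rewrite -big_split /=; apply: eq_bigr => i _.
  by rewrite -mulr_sumr; ring.
apply: ler_sum => i _; apply: ler_wpM2l => //.
by have := mw_regret i Nr; rewrite /c; lra.
Qed.

End MultiplicativeWeights.

Section ConvexCombinations.
Variables (R : realFieldType) (T : finType).

Lemma convex_comb_range (q a : T -> R) : (forall i, 0 <= q i) -> \sum_i q i = 1 ->
  (forall i, 0 <= a i <= 1) -> 0 <= \sum_i q i * a i <= 1.
Proof.
move=> q0 q1 a01; apply/andP; split.
  by apply: sumr_ge0 => i _; rewrite mulr_ge0 //; case/andP: (a01 i).
rewrite -q1; apply: ler_sum => i _.
by rewrite ler_piMr //; case/andP: (a01 i).
Qed.

Lemma convex_comb_affine (q a : T -> R) c d : \sum_i q i = 1 ->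
  \sum_i q i * (c * a i + d) = c * \sum_i q i * a i + d.
Proof.
move=> q1; have -> : c * \sum_i q i * a i + d = \sum_i (c * (q i * a i) + q i * d).
  by rewrite big_split /= -mulr_sumr -mulr_suml q1 mul1r.
by apply: eq_bigr => i _; ring.
Qed.

End ConvexCombinations.

Section Normalize.
Variables (R : rcfType) (T : finType).

Definition normalize (w : {ffun T -> R}) : {ffun T -> R} :=
  [ffun i => w i / \sum_j w j].

Lemma normalize_prob (w : {ffun T -> R}) (i0 : T) :
  (forall i, 0 < w i) -> prob_vec (normalize w).
Proof.
move=> w0; have sw : 0 < \sum_j w j.
  by rewrite (bigD1 i0) //= ltr_pwDl // sumr_ge0 // => j _; rewrite ltW.
split=> [i|]; first by rewrite ffunE divr_ge0 // ltW.
by under eq_bigr do rewrite ffunE; rewrite -mulr_suml divff // gt_eqF.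
Qed.

End Normalize.

Definition clamp01 (R : realDomainType) (x : R) : R := Num.min 1 (Num.max 0 x).

Lemma clamp01_range (R : realDomainType) (x : R) : 0 <= clamp01 x <= 1.
Proof. by rewrite /clamp01 le_min ge_min le_max !lexx ler01 /= ?orbT. Qed.

Lemma clamp01_id (R : realDomainType) (x : R) : 0 <= x <= 1 -> clamp01 x = x.
Proof. by case/andP=> x0 x1; rewrite /clamp01 max_r // min_r. Qed.

Lemma rescale01 (R : realFieldType) (x L : R) : 0 < L -> `|x| <= L ->
  0 <= (x + L) / (2 * L) <= 1.
Proof.
move=> L0; rewrite ler_norml => /andP[xL1 xL2]; apply/andP; split.
  by apply: divr_ge0; lra.
by rewrite ler_pdivrMr ?mulr_gt0 //; lra.
Qed.

Lemma sub01_pm1 (R : realDomainType) (u b : R) : 0 <= u <= 1 -> 0 <= b <= 1 ->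
  -1 <= u - b <= 1.
Proof. by move=> /andP[u0 u1] /andP[b0 b1]; apply/andP; split; lra. Qed.

Lemma pastS n (R : rcfType) (E : nat -> 'M[R[i]]_(2 ^ n * 2 ^ n)) (b : nat -> R) t :
  past E b t.+1 = rcons (past E b t) (E t, b t).
Proof. by rewrite /past -[t.+1]addn1 iotaD map_cat cats1. Qed.

Section PauliLearner.
Variables (R : rcfType) (n : nat) (ell : R -> R) (L lam del : R).
Local Notation I := (n.-tuple bool * n.-tuple bool)%type.
Local Notation MM := 'M[R[i]]_(2 ^ n * 2 ^ n).

Definition pauli_id : I := (nseq_tuple n false, nseq_tuple n false).

Definition pauli_pred (E : MM) (i : I) : R :=
  pred_val E (choi (unitary_channel (pauli R i.1 i.2))).

Lemma pauli_pred_range (E : MM) i : channel_test E -> 0 <= pauli_pred E i <= 1.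
Proof. by move=> hE; apply: pred_val_unitary_range => //; apply: unitary_pauli. Qed.

Lemma pred_val_pauli_channel (E : MM) (p : {ffun I -> R}) :
  pred_val E (choi (pauli_channel p)) = \sum_i p i * pauli_pred E i.
Proof. by rewrite choi_pauli_channel pred_val_suml. Qed.

Lemma pred_val_pauli_channel_range (E : MM) (p : {ffun I -> R}) :
  channel_test E -> prob_vec p -> 0 <= pred_val E (choi (pauli_channel p)) <= 1.
Proof.
move=> hE [p0 p1]; rewrite pred_val_pauli_channel.
by apply: convex_comb_range => // i; apply: pauli_pred_range.
Qed.

(* Expert i suffers the linearisation s * a_i of the loss at the current
   prediction, rescaled from [-L, L] into [0, 1]; the clamp is inactive on valid
   inputs and only keeps the weights positive on arbitrary histories. *)
Definition surrogate (E : MM) (b : R) (q : {ffun I -> R}) (i : I) : R :=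
  let s := diff_quot ell del (pred_val E (choi (pauli_channel q)) - b) in
  clamp01 ((s * pauli_pred E i + L) / (2 * L)).

Definition mw_update (w : {ffun I -> R}) (Eb : MM * R) : {ffun I -> R} :=
  [ffun i => w i * (1 - lam * surrogate Eb.1 Eb.2 (normalize w) i)].

Definition mw_weights (h : history R n) : {ffun I -> R} :=
  foldl mw_update [ffun _ => 1] h.

Definition pauli_learner : strategy R n :=
  fun h => choi (pauli_channel (normalize (mw_weights h))).

Lemma mw_weights_pos h i : 0 <= lam < 1 -> 0 < mw_weights h i.
Proof.
move=> /andP[l0 l1]; rewrite /mw_weights.
have : forall i, 0 < ([ffun _ => 1] : {ffun I -> R}) i by move=> j; rewrite ffunE.
elim: h [ffun _ => 1] => [|Eb h IH] w w0 /=; first exact: w0.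
apply: IH => j; rewrite ffunE mulr_gt0 // subr_gt0.
have /andP[_ c1] := clamp01_range ((diff_quot ell del
  (pred_val Eb.1 (choi (pauli_channel (normalize w))) - Eb.2) * pauli_pred Eb.1 j + L) / (2 * L)).
by apply: le_lt_trans (ler_wpM2l l0 c1) _; rewrite mulr1.
Qed.

Lemma pauli_learner_in_PAULI h : 0 <= lam < 1 -> in_PAULI' (pauli_learner h).
Proof.
by move=> lam01; exists (normalize (mw_weights h)); split=> //;
  apply: (normalize_prob pauli_id) => i; apply: mw_weights_pos.
Qed.

Definition regret (strat : strategy R n) (T : nat) (E : nat -> MM) (b : nat -> R)
    (p : {ffun I -> R}) : R :=
  \sum_(t < T) ell (pred_val (E t) (strat (past E b t)) - b t)
  - \sum_(t < T) ell (pred_val (E t) (choi (pauli_channel p)) - b t).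

Hypothesis ell_convex : convex_on_pm1 ell.
Hypothesis ell_lipschitz : lipschitz_on_pm1 L ell.

Lemma surrogate_round (E : MM) (b : R) (q p : {ffun I -> R}) :
  0 < L -> 0 < del <= 1 -> channel_test E -> 0 <= b <= 1 ->
  prob_vec q -> prob_vec p ->
  ell (pred_val E (choi (pauli_channel q)) - b)
  - ell (pred_val E (choi (pauli_channel p)) - b) <=
  2 * L * (\sum_i q i * surrogate E b q i - \sum_i p i * surrogate E b q i)
  + 2 * L * del.
Proof.
move=> L0 del01 hE b01 [q0 q1] [p0 p1].
have a01 := pauli_pred_range _ hE.
have u01 := pred_val_pauli_channel_range hE (conj q0 q1).
have v01 := pred_val_pauli_channel_range hE (conj p0 p1).
have [s_le subgrad] := diff_quot_subgradient ell_convex ell_lipschitz del01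
  (sub01_pm1 u01 b01) (sub01_pm1 v01 b01).
set u := pred_val E (choi (pauli_channel q)) in s_le subgrad *.
set v := pred_val E (choi (pauli_channel p)) in subgrad *.
set s := diff_quot ell del (u - b) in s_le subgrad.
have sur i : surrogate E b q i = s / (2 * L) * pauli_pred E i + 1 / 2.
  rewrite /surrogate -/u -/s clamp01_id; first by field; rewrite gt_eqF.
  apply: rescale01 => //; have /andP[ai0 ai1] := a01 i.
  by rewrite normrM (ger0_norm ai0) (le_trans _ s_le) // ler_piMr.
have avg (r : {ffun I -> R}) : \sum_i r i = 1 ->
    \sum_i r i * surrogate E b q i = s / (2 * L) * pred_val E (choi (pauli_channel r)) + 1 / 2.
  by move=> r1; under eq_bigr do rewrite sur; rewrite convex_comb_affine // -pred_val_pauli_channel.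
rewrite !avg // -/u -/v.
have -> : 2 * L * (s / (2 * L) * u + 1 / 2 - (s / (2 * L) * v + 1 / 2)) = s * (u - b - (v - b)).
  by field; rewrite gt_eqF.
exact: subgrad.
Qed.

Lemma regret_pauli_learner (T m r : nat) (E : nat -> MM) (b : nat -> R)
    (p : {ffun I -> R}) :
  0 < L -> 0 <= lam <= 1 / 4 -> 0 < del <= 1 -> (4 <= m)%N ->
  #|{: I}|%:R * (1 - m%:R^-1 : R) ^+ r <= 1 ->
  (forall t, (t < T)%N -> channel_test (E t)) ->
  (forall t, (t < T)%N -> 0 <= b t <= 1) -> prob_vec p ->
  m%:R * lam * (regret pauli_learner T E b p - 2 * L * del * T%:R)
  <= 2 * L * (m%:R * lam ^+ 2 * T%:R + 2 * T%:R + r%:R).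
Proof.
move=> L0 lam_small del01 m_ge4 Nr hE hb [p0 p1].
have lam01 : 0 <= lam < 1 by case/andP: lam_small => l0 l1; rewrite l0 /=; lra.
pose w t := mw_weights (past E b t).
pose g t i := surrogate (E t) (b t) (normalize (w t)) i.
have w_eq t : w t = [ffun i => mw_weight lam g t i].
  elim: t => [|t IH]; first by apply/ffunP => i; rewrite !ffunE.
  rewrite /w pastS /mw_weights foldl_rcons; apply/ffunP => i; rewrite !ffunE /=.
  by congr (_ * _); rewrite -/(mw_weights _) -/(w t) IH ffunE.
have q_eq t : normalize (w t) = [ffun i => mw_prob lam g t i].
  apply/ffunP => i; rewrite w_eq !ffunE /mw_prob /mw_total.
  by under eq_bigr do rewrite ffunE.
have g01 t : (t < T)%N -> forall i, 0 <= g t i <= 1 by move=> _ i; apply: clamp01_range.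
have rounds : regret pauli_learner T E b p <=
    2 * L * (\sum_(t < T) mw_loss lam g t - \sum_(t < T) \sum_i p i * g t i)
    + 2 * L * del * T%:R.
  have -> : 2 * L * del * T%:R = \sum_(t < T) 2 * L * del.
    by rewrite sumr_const card_ord mulr_natr.
  rewrite /regret -!sumrB mulr_sumr -big_split /=; apply: ler_sum => t _.
  have q_prob : prob_vec (normalize (w t)).
    by apply: (normalize_prob pauli_id) => i; apply: mw_weights_pos.
  have := surrogate_round (b := b t) L0 del01
    (hE t (ltn_ord t)) (hb t (ltn_ord t)) q_prob (conj p0 p1).
  suff -> : mw_loss lam g t = \sum_i normalize (w t) i * g t i by [].
  by rewrite /mw_loss q_eq; apply: eq_bigr => i _; rewrite ffunE.
have mw := mw_regret_mixed pauli_id lam_small g01 m_ge4 p0 p1 Nr.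
set A := \sum_(t < T) mw_loss lam g t in rounds mw *.
set B := \sum_(t < T) \sum_i p i * g t i in rounds mw *.
set c := _ + r%:R in mw *.
have ml0 : 0 <= m%:R * lam by rewrite mulr_ge0 //; case/andP: lam_small.
apply: le_trans (ler_wpM2l ml0 (_ : _ <= 2 * L * (A - B))) _; first lra.
rewrite (_ : _ * (2 * L * _) = 2 * L * (m%:R * lam * A - m%:R * lam * B)); last by ring.
by rewrite ler_pM2l ?mulr_gt0 //; lra.
Qed.

End PauliLearner.

Lemma exists_tuning n T : (0 < n)%N -> (16 * n < T)%N ->
  exists m0, [/\ (4 * T <= m0)%N, (n * m0 ^ 2 <= T ^ 3)%N & (T ^ 3 <= 4 * n * m0 ^ 2)%N].
Proof.
move=> n0 nT.
have ex0 : exists k, (n * k ^ 2 <= T ^ 3)%N by exists 0%N; rewrite expnS mul0n muln0.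
have ub k : (n * k ^ 2 <= T ^ 3)%N -> (k <= T ^ 3)%N by nia.
case: (ex_maxnP ex0 ub) => m0 lo max_m0; exists m0.
have hi : (T ^ 3 < n * m0.+1 ^ 2)%N by rewrite ltnNge; apply/negP => /max_m0; rewrite ltnn.
split=> //; last by nia.
rewrite leqNgt; apply/negP => small.
have : (n * m0.+1 ^ 2 <= n * (4 * T) ^ 2)%N by rewrite leq_mul2l leq_exp2r ?small ?orbT.
have : (n * (4 * T) ^ 2 < T ^ 3)%N.
  have -> : (n * (4 * T) ^ 2 = 16 * n * T ^ 2)%N by rewrite expnMn; lia.
  by rewrite [(T ^ 3)%N]expnS ltn_mul2r expn_gt0 (leq_ltn_trans _ nT).
by move=> h2 h1; have := ltn_trans hi (leq_ltn_trans h1 h2); rewrite ltnn.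
Qed.

Lemma tuned_regret_bound (R : rcfType) (T m0 n : nat) (L reg : R) :
  (0 < n)%N -> (0 < T)%N -> (0 < m0)%N -> 0 <= L ->
  (n * m0 ^ 2 <= T ^ 3)%N -> (T ^ 3 <= 4 * n * m0 ^ 2)%N ->
  let lam := T%:R / m0%:R in
  (2 * m0)%:R * lam * (reg - 2 * L * T%:R^-1 * T%:R) <=
  2 * L * ((2 * m0)%:R * lam ^+ 2 * T%:R + 2 * T%:R + (2 * m0 * (2 * n))%:R) ->
  reg <= 12%:R * L * Num.sqrt ((n * T)%:R).
Proof.
move=> n0 T0 m00 L0 lo hi lam.
have Tr : (1 : R) <= T%:R by rewrite ler1n.
have Nr : (1 : R) <= n%:R by rewrite ler1n.
have Mr : (0 : R) < m0%:R by rewrite ltr0n.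
set S := Num.sqrt _.
have S2 : S ^+ 2 = n%:R * T%:R by rewrite sqr_sqrtr ?ler0n // natrM.
have S1 : 1 <= S by rewrite -(ler_sqr (x := 1)) ?nnegrE ?sqrtr_ge0 // expr1n S2; nra.
have A_le : T%:R ^+ 2 / m0%:R <= 2 * S.
  rewrite -ler_sqr ?nnegrE ?mulr_ge0 ?sqrtr_ge0 ?exprn_ge0 ?invr_ge0 ?ler0n //.
  rewrite [(2 * S) ^+ 2]exprMn S2 expr_div_n ler_pdivrMr ?exprn_gt0 //.
  have hi' : T%:R ^+ 3 <= 4 * n%:R * m0%:R ^+ 2 :> R.
    by rewrite -!natrX -!natrM ler_nat.
  have -> : T%:R ^+ 2 ^+ 2 = T%:R * T%:R ^+ 3 :> R by ring.
  have -> : 2 ^+ 2 * (n%:R * T%:R) * m0%:R ^+ 2 = T%:R * (4 * n%:R * m0%:R ^+ 2) :> R.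
    by ring.
  exact: ler_wpM2l.
have B_le : m0%:R * n%:R / T%:R <= S.
  rewrite -ler_sqr ?nnegrE ?sqrtr_ge0 ?divr_ge0 ?mulr_ge0 ?ler0n //.
  rewrite S2 expr_div_n ler_pdivrMr ?exprn_gt0 ?ltr0n //.
  have lo' : n%:R * m0%:R ^+ 2 <= T%:R ^+ 3 :> R by rewrite -!natrX -!natrM ler_nat.
  have -> : (m0%:R * n%:R) ^+ 2 = n%:R * (n%:R * m0%:R ^+ 2) :> R by ring.
  have -> : n%:R * T%:R * T%:R ^+ 2 = n%:R * T%:R ^+ 3 :> R by ring.
  exact: ler_wpM2l.
have -> : (2 * m0)%:R * lam = 2 * T%:R :> R by rewrite natrM /lam; field; rewrite gt_eqF.
have -> : 2 * L * T%:R^-1 * T%:R = 2 * L :> R by field; rewrite gt_eqF //; lra.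
have -> : (2 * m0)%:R * lam ^+ 2 * T%:R + 2 * T%:R + (2 * m0 * (2 * n))%:R =
    2 * T%:R * (T%:R ^+ 2 / m0%:R + 1 + 2 * (m0%:R * n%:R / T%:R)) :> R.
  by rewrite !natrM /lam; field; rewrite !gt_eqF //; lra.
rewrite mulrCA ler_pM2l ?mulr_gt0 //; last by lra.
by nra.
Qed.

Section SmallRegime.
Variables (R : rcfType) (n : nat) (ell : R -> R) (L : R).
Hypothesis ell_lipschitz : lipschitz_on_pm1 L ell.
Local Notation I := (n.-tuple bool * n.-tuple bool)%type.
Local Notation MM := 'M[R[i]]_(2 ^ n * 2 ^ n).

Lemma pred_val_pauli_channel_n0 (E : MM) (p : {ffun I -> R}) : n = 0%N ->
  prob_vec p -> pred_val E (choi (pauli_channel p)) = pauli_pred E (pauli_id n).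
Proof.
move=> n0 [_ p1]; have t0 (z : n.-tuple bool) : z = nseq_tuple n false.
  by apply: val_inj; rewrite /= (@size0nil _ z) ?size_tuple // n0.
rewrite pred_val_pauli_channel (eq_bigr (fun i => p i * pauli_pred E (pauli_id n))).
  by rewrite -mulr_suml p1 mul1r.
by case=> z x _; rewrite [z]t0 [x]t0.
Qed.

Lemma lipschitz_gap (u v b : R) : 0 <= u <= 1 -> 0 <= v <= 1 -> 0 <= b <= 1 ->
  ell (u - b) - ell (v - b) <= L * `|u - v| /\ `|u - v| <= 1.
Proof.
move=> u01 v01 b01; split.
  have := ell_lipschitz (sub01_pm1 u01 b01) (sub01_pm1 v01 b01).
  by rewrite opprB addrA subrK addrC => /(le_trans (ler_norm _)).
by case/andP: u01 => u0 u1; case/andP: v01 => v0 v1; rewrite ler_norml; apply/andP; split; lra.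
Qed.

Lemma learner_round_le (strat : strategy R n) (h : history R n) (E : MM) (b : R)
    (p : {ffun I -> R}) :
  in_PAULI' (strat h) -> channel_test E -> 0 <= b <= 1 -> prob_vec p ->
  ell (pred_val E (strat h) - b) - ell (pred_val E (choi (pauli_channel p)) - b)
  <= L * (0 < n)%N%:R.
Proof.
move=> [q [hq ->]] hE b01 hp.
have [gap gap1] := lipschitz_gap (pred_val_pauli_channel_range hE hq)
  (pred_val_pauli_channel_range hE hp) b01.
have [n0|n_pos] := posnP n.
  rewrite !pred_val_pauli_channel_n0 // subrr.
  by rewrite mulr_ge0 ?ler0n // (lipschitz_ge0 ell_lipschitz).
apply: le_trans gap _; apply: ler_wpM2l; first exact: lipschitz_ge0 ell_lipschitz.
exact: gap1.
Qed.

Lemma regret_small_case (strat : strategy R n) (T : nat) (E : nat -> MM)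
    (b : nat -> R) (p : {ffun I -> R}) :
  ~~ [&& (0 < n)%N, (16 * n < T)%N & 0 < L] ->
  (forall h, in_PAULI' (strat h)) ->
  (forall t, (t < T)%N -> channel_test (E t)) ->
  (forall t, (t < T)%N -> 0 <= b t <= 1) -> prob_vec p ->
  regret ell strat T E b p <= 12%:R * L * Num.sqrt ((n * T)%:R).
Proof.
move=> small hstrat hE hb hp.
have L0 := lipschitz_ge0 ell_lipschitz; have S0 := sqrtr_ge0 ((n * T)%:R : R).
apply: le_trans (_ : _ <= \sum_(t < T) L * (0 < n)%N%:R) _.
  rewrite /regret -sumrB; apply: ler_sum => t _.
  exact: learner_round_le (hE t (ltn_ord t)) (hb t (ltn_ord t)) hp.
rewrite sumr_const card_ord; have [n0|n_pos] := posnP n.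
  by rewrite mulr0 mul0rn !mulr_ge0.
rewrite mulr1 -[L *+ T]mulr_natr.
move: small; rewrite n_pos /= negb_and -leqNgt -leNgt => /orP[TnS|L_le0]; last first.
  have -> : L = 0 by apply/le_anti; rewrite L_le0 L0.
  by rewrite mulr0 !mul0r.
have T_le : (T%:R : R) <= 4 * Num.sqrt ((n * T)%:R).
  rewrite -ler_sqr ?nnegrE ?mulr_ge0 ?ler0n // exprMn sqr_sqrtr ?ler0n //.
  by rewrite -natrX -[4 ^+ 2]natrX -natrM ler_nat expnS expn1 mulnA leq_mul2r TnS orbT.
rewrite -mulrA mulrCA; apply: ler_wpM2l => //.
by have := T_le; lra.
Qed.

End SmallRegime.

(* The rate lam = T / m0 is about sqrt (n / T).  With m = 2 m0 we get m lam = 2 T,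
   so the rounding losses 2 T + r of the discrete logarithm, divided by m lam, are
   O(1 + n / lam); r = 2 m n makes 4^n beta^r <= 1 since beta^m <= 1/2. *)
Lemma pauli_learner_regret_large (R : rcfType) (n : nat) (L : R) (ell : R -> R) (T : nat) :
  convex_on_pm1 ell -> lipschitz_on_pm1 L ell ->
  (0 < n)%N -> (16 * n < T)%N -> 0 < L ->
  exists strat : strategy R n,
    (forall h : history R n, in_PAULI' (strat h)) /\
    forall (E : nat -> 'M[R[i]]_(2 ^ n * 2 ^ n)) (b : nat -> R),
      (forall t, (t < T)%N -> channel_test (E t)) ->
      (forall t, (t < T)%N -> 0 <= b t <= 1) ->
    forall p : {ffun (n.-tuple bool * n.-tuple bool) -> R}, prob_vec p ->
      regret ell strat T E b p <= 12%:R * L * Num.sqrt ((n * T)%:R).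
Proof.
move=> ell_convex ell_lipschitz n0 nT L0.
have [m0 [Tm0 lo hi]] := exists_tuning n0 nT.
have T0 : (0 < T)%N by apply: leq_ltn_trans nT.
have m00 : (0 < m0)%N by apply: leq_trans Tm0; rewrite muln_gt0.
have m_ge4 : (4 <= 2 * m0)%N by lia.
have lam_small : 0 <= (T%:R / m0%:R : R) <= 1 / 4.
  have : (4 * T)%:R <= m0%:R :> R by rewrite ler_nat.
  rewrite natrM divr_ge0 ?ler0n //= ler_pdivrMr ?ltr0n //; lra.
have del01 : 0 < (T%:R^-1 : R) <= 1.
  by rewrite invr_gt0 ltr0n T0 invf_le1 ?ler1n ?ltr0n.
have card_beta : #|{: n.-tuple bool * n.-tuple bool}|%:R *
    (1 - (2 * m0)%:R^-1 : R) ^+ (2 * m0 * (2 * n)) <= 1.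
  rewrite card_prod card_tuple card_bool natrM natrX exprM -exprD addnn -mul2n -exprMn.
  have := exprn_ge0 (2 * m0) (dlog_base_ge0 R m_ge4); have := dlog_base_half R m_ge4.
  by move=> half ge0; apply: exprn_ile1; lra.
exists (pauli_learner ell L (T%:R / m0%:R) T%:R^-1); split=> [h|E b hE hb p hp].
  by apply: pauli_learner_in_PAULI; case/andP: lam_small => l0 l1; rewrite l0 /=; lra.
have := regret_pauli_learner ell_convex ell_lipschitz L0 lam_small del01 m_ge4 card_beta hE hb hp.
exact: tuned_regret_bound n0 T0 m00 (ltW L0) lo hi.
Qed.

Theorem theorem3p5 :
  exists c : nat,
  forall (R : rcfType) (n : nat) (L : R) (ell : R -> R),
    convex_on_pm1 ell -> lipschitz_on_pm1 L ell ->
  forall T : nat,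
  exists strat : strategy R n,
    (forall h : history R n, in_PAULI' (strat h)) /\
    forall (E : nat -> 'M[R[i]]_(2 ^ n * 2 ^ n)) (b : nat -> R),
      (forall t, (t < T)%N -> channel_test (E t)) ->
      (forall t, (t < T)%N -> 0 <= b t <= 1) ->
    forall p : {ffun (n.-tuple bool * n.-tuple bool) -> R}, prob_vec p ->
      \sum_(t < T) ell (pred_val (E t) (strat (past E b t)) - b t)
      - \sum_(t < T) ell (pred_val (E t) (choi (pauli_channel p)) - b t)
      <= c%:R * L * Num.sqrt ((n * T)%:R).
Proof.
exists 12%N => R n L ell ell_convex ell_lipschitz T.
have [/and3P[n_pos nT L_pos] | small] := boolP [&& (0 < n)%N, (16 * n < T)%N & 0 < L].
  exact: pauli_learner_regret_large.
have lam01 : 0 <= (0 : R) < 1 by rewrite lexx ltr01.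
exists (pauli_learner ell L 0 1); split=> [h|E b hE hb p hp].
  exact: pauli_learner_in_PAULI.
by apply: (regret_small_case ell_lipschitz small) => // h; apply: pauli_learner_in_PAULI.
Qed.
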